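(* Let $x,y\in V(D^+)\setminus\{s\}$ with $y\prec x$ and $y\notin F$. Then $g(x,u)=\infty$ for every $u\in C(y)$.
   Context: $G=(V,E,w)$ is a simple, connected, undirected graph with positive edge lengths, $s,t\in V$, $d(\cdot,\cdot)$ the shortest path distance in $G$. $D$ is the union of all shortest $st$-paths of $G$, and $D^+$ is the directed acyclic graph obtained from $D$ by orienting every edge toward $t$. $x\prec y$ means $x$ is an ancestor of $y$ in $D^+$ (a directed path of positive length from $x$ to $y$ exists). For $x\neq s$, $v\neq x$ is an $s$-dominator of $x$ if every directed path from $s$ to $x$ in $D^+$ contains $v$, and $I_s(x)$ is the $s$-dominator of $x$ closest to $x$ (every other $s$-dominator of $x$ is an $s$-dominator of $I_s(x)$). Symmetrically, for $x\neq t$, $v\neq x$ is a $t$-dominator of $x$ if every directed path from $x$ to $t$ in $D^+$ contains $v$, and $I_t(x)$ is the $t$-dominator closest to $x$. For $x\neq s$, $C(x)=\{v: I_s(x)\prec v\prec x\}$. For $x\neq s$ and $y\in V(D^+)$, $g(x,y)=d(y,x)$ if $y\in C(x)$ and $x\prec I_t(y)$, and $g(x,y)=\infty$ otherwise; $g^*(x)=\min_y g(x,y)$. $F=\{x\in V(D^+)\setminus\{s\}: g^*(x)\neq\infty\}$. *)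

From HB Require Import structures.
From mathcomp Require Import all_boot all_order all_algebra.
From Stdlib Require Import ClassicalEpsilon.
Set Implicit Arguments. Unset Strict Implicit. Unset Printing Implicit Defensive.
Import Order.TTheory GRing.Theory Num.Theory.
Local Open Scope ring_scope.

Section Graph.
Variables (R : realDomainType) (T : finType).
(* e : adjacency relation, w : edge lengths, d : distance, s t : terminals *)
Variables (e : rel T) (w : T -> T -> R) (d : T -> T -> R) (s t : T).

Definition simple_graph := irreflexive e /\ symmetric e.
Definition connected_graph := forall u v, connect e u v.
Definition pos_lengths := (forall u v, w u v = w v u) /\ (forall u v, e u v -> 0 < w u v).

Fixpoint walk_len (x : T) (p : seq T) : R :=
  if p is y :: p' then w x y + walk_len y p' else 0.

Definition is_sp_dist :=
  forall u v,
    (exists p, [/\ path e u p, last u p = v & walk_len u p = d u v]) /\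
    (forall p, path e u p -> last u p = v -> d u v <= walk_len u p).

Definition shortest_st (p : seq T) :=
  [/\ path e s p, last s p = t & walk_len s p = d s t].

Definition inD (v : T) := exists p, shortest_st p /\ v \in s :: p.

Definition arcD (u v : T) := exists p, shortest_st p /\ infix [:: u; v] (s :: p).

Fixpoint dpath (x : T) (q : seq T) : Prop :=
  if q is y :: q' then arcD x y /\ dpath y q' else True.

Definition prec (x y : T) := exists q, [/\ q <> [::], dpath x q & last x q = y].

Definition sdom (v x : T) :=
  v <> x /\ forall q, dpath s q -> last s q = x -> v \in s :: q.
Definition tdom (v x : T) :=
  v <> x /\ forall q, dpath x q -> last x q = t -> v \in x :: q.

Definition Is_of (x a : T) :=
  [/\ x <> s, sdom a x & forall v, sdom v x -> v <> a -> sdom v a].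
Definition It_of (x b : T) :=
  [/\ x <> t, tdom b x & forall v, tdom v x -> v <> b -> tdom v b].

Definition inC (x v : T) := exists a, Is_of x a /\ prec a v /\ prec v x.

(* g(x,y) ; None stands for infinity *)
Definition g_cond (x y : T) := inC x y /\ exists b, It_of y b /\ prec x b.
Definition g (x y : T) : option R :=
  if excluded_middle_informative (g_cond x y) then Some (d y x) else None.

Definition omin (a b : option R) : option R :=
  match a, b with
  | None, _ => b
  | _, None => a
  | Some x, Some y => Some (Num.min x y)
  end.

(* g*(x) = min_y g(x,y)  (g(x,y) = oo automatically for y outside V(D^+)) *)
Definition gstar (x : T) : option R := \big[omin/None]_(y : T) g x y.

Definition inF (x : T) := [/\ inD x, x <> s & gstar x <> None].

End Graph.

From mathcomp Require Import all_boot all_order all_algebra.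
From Stdlib Require Import ClassicalEpsilon.
Set Implicit Arguments. Unset Strict Implicit. Unset Printing Implicit Defensive.

(* If g(x,u) were finite, then x precedes I_t(u), hence so does y; together
   with u in C(y) this makes g(y,u), and thus g*(y), finite, i.e. y in F. *)

Lemma omin_eq_None (R : realDomainType) (a b : option R) :
  omin a b = None -> a = None /\ b = None.
Proof. by case: a; case: b. Qed.

Lemma big_omin_eq_None (R : realDomainType) (I : eqType) (r : seq I)
    (F : I -> option R) :
  \big[@omin R/None]_(i <- r) F i = None -> forall i, i \in r -> F i = None.
Proof.
elim: r => [|a r IHr]; first by rewrite big_nil.
rewrite big_cons => /omin_eq_None [Fa Fr] i; rewrite inE => /predU1P [-> //|].
exact: IHr.
Qed.

Section Dag.
Variables (R : realDomainType) (T : finType).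
Variables (e : rel T) (w : T -> T -> R) (d : T -> T -> R) (s t : T).

Local Notation dpath := (dpath e w d s t).
Local Notation prec := (prec e w d s t).
Local Notation g_cond := (g_cond e w d s t).
Local Notation g := (g e w d s t).

Lemma dpath_cat x q1 q2 : dpath x q1 -> dpath (last x q1) q2 -> dpath x (q1 ++ q2).
Proof. by elim: q1 x => [|y q IHq] x //= [xy yq] qq2; split => //; apply: IHq. Qed.

Lemma prec_trans a b c : prec a b -> prec b c -> prec a c.
Proof.
move=> [q1 [q1n0 pq1 <-]] [q2 [q2n0 pq2 <-]]; exists (q1 ++ q2); split.
- by case: q1 q1n0 {pq1 pq2}.
- exact: dpath_cat.
- by rewrite last_cat.
Qed.

Lemma g_eq_None x u : g x u = None <-> ~ g_cond x u.
Proof. by rewrite /g; case: excluded_middle_informative. Qed.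

Lemma gstar_eq_None x : gstar e w d s t x = None -> forall u, g x u = None.
Proof. by move=> gx0 u; apply: big_omin_eq_None gx0 _ (mem_index_enum u). Qed.

Lemma g_cond_prec y x u : prec y x -> g_cond x u -> inC e w d s t y u -> g_cond y u.
Proof.
move=> yx [_ [b [Itub xb]]] uCy; split => //.
by exists b; split => //; apply: prec_trans yx xb.
Qed.

End Dag.

Theorem lemma8 (R : realDomainType) (T : finType) (e : rel T) (w : T -> T -> R)
  (d : T -> T -> R) (s t : T)
  (Hsimple : simple_graph e) (Hconn : connected_graph e) (Hw : pos_lengths e w)
  (Hd : is_sp_dist e w d)
  (x y : T) (HxD : inD e w d s t x) (HyD : inD e w d s t y)
  (Hxs : x <> s) (Hys : y <> s)
  (Hyx : prec e w d s t y x) (HyF : ~ inF e w d s t y) :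
  forall u, inC e w d s t y u -> g e w d s t x u = None.
Proof.
move=> u uCy; apply/g_eq_None => gxu.
apply: HyF; split => // gy0.
have /g_eq_None := gstar_eq_None gy0 u.
by apply; apply: g_cond_prec Hyx gxu uCy.
Qed.
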